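(* Let $\mathcal O$ be a complete discrete valuation ring with uniformizer $\varpi$ and fraction field $E$. Let $T,\tilde T$ be reduced finite flat local $\mathcal O$-algebras with $\mathcal O$-algebra maps $\lambda:T\to\mathcal O$ and $\tilde\lambda:\tilde T\to\mathcal O$, and corresponding idempotents $e\in T\otimes E$ and $\tilde e\in\tilde T\otimes E$. Let $M_1$ be a $T$-module and $M_2$ a $\tilde T$-module, both finite free over $\mathcal O$. Let $[\,,\,]:M_1\times M_2\to\mathcal O$ be a perfect $\mathcal O$-bilinear pairing (both induced maps $M_1\to\mathrm{Hom}_{\mathcal O}(M_2,\mathcal O)$ and $M_2\to\mathrm{Hom}_{\mathcal O}(M_1,\mathcal O)$ are isomorphisms). Assume that its $E$-bilinear extension satisfies \[[eM_1,(1-\tilde e)M_2]=0\quad\text{and}\quad[(1-e)M_1,\tilde eM_2]=0.\] (a) Then $[\,,\,]$ induces a perfect $\mathcal O$-bilinear pairing $C_0^\lambda(M_1)\times C_0^{\tilde\lambda}(M_2)\to E/\mathcal O$, and $\eta_\lambda(M_1)=\eta_{\tilde\lambda}(M_2)$. (b) If $M_1[\ker\lambda]$ and $M_2[\ker\tilde\lambda]$ are both free of rank $1$ over $\mathcal O$ with bases $\delta_1,\delta_2$, then $\eta_\lambda(M_1)=\eta_{\tilde\lambda}(M_2)=([\delta_1,\delta_2])$.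
   Context: For a reduced finite flat local $\mathcal O$-algebra $T$ with $\lambda:T\to\mathcal O$, there is a canonical decomposition $T\otimes E\cong E\times T^c_E$ whose first projection is $\lambda\otimes E$; $e$ corresponds to $(1,0)$. For a $T$-module $M$ finite free over $\mathcal O$: $C_0^\lambda(M)=eM/(eM\cap M)$ (inside $M\otimes E$), $\eta_\lambda(M)=\mathrm{Fitt}_{\mathcal O}(C_0^\lambda(M))$, and $M[\ker\lambda]=\{m\in M:(\ker\lambda)m=0\}$. *)

From HB Require Import structures.
From mathcomp Require Import all_boot all_order all_algebra.
Set Implicit Arguments. Unset Strict Implicit. Unset Printing Implicit Defensive.
Import Order.TTheory GRing.Theory Num.Theory.
Local Open Scope ring_scope.

(* The complete DVR O is a
   subring of its fraction field E; a finite free O-module M (resp. finite flat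
   O-algebra T) is modelled as an O-lattice inside V = M (x) E (resp. inside the
   E-algebra A = T (x) E): an O-submodule having an O-basis which is also an
   E-basis of V. *)

Section Defs.
Variable E : fieldType.
Implicit Types (O : E -> Prop).

Definition subring_of O :=
  [/\ O 0, O 1, (forall x y, O x -> O y -> O (x - y)) &
      (forall x y, O x -> O y -> O (x * y))].

Definition is_frac_field O :=
  forall x : E, exists a b, [/\ O a, O b, b != 0 & x = a / b].

Definition unitO O (u : E) := [/\ O u, u != 0 & O u^-1].

Definition dvr_with_unif O (w : E) :=
  [/\ subring_of O, is_frac_field O, O w, w != 0 /\ ~ O w^-1 &
      forall x, O x -> x != 0 -> exists u n, unitO O u /\ x = u * w ^+ n].

Definition wadic_complete O (w : E) :=
  forall a : nat -> E, (forall n, O (a n)) ->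
    (forall n, O ((a n.+1 - a n) / w ^+ n)) ->
    exists x, O x /\ forall n, O ((x - a n) / w ^+ n).

Definition complete_dvr O (w : E) := dvr_with_unif O w /\ wadic_complete O w.

Definition is_lattice O (V : zmodType) (sc : E -> V -> V) (L : V -> Prop) :=
  exists n (b : 'I_n -> V),
    [/\ forall v, exists c : 'I_n -> E, v = \sum_i sc (c i) (b i),
        forall c : 'I_n -> E, \sum_i sc (c i) (b i) = 0 -> forall i, c i = 0 &
        forall c : 'I_n -> E, L (\sum_i sc (c i) (b i)) <-> (forall i, O (c i))].

Definition escale (A : lalgType E) (V : lmodType A) (c : E) (v : V) : V :=
  (c%:A : A) *: v.

Definition red_fflat_local_order O (A : comAlgType E) (T : A -> Prop) :=
  [/\ is_lattice O ( *:%R) T, T 1,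
      (forall x y, T x -> T y -> T (x * y)),
      (forall t k, T t -> t ^+ k.+1 = 0 -> t = 0) &
      (1 : A) != 0 /\ forall t, T t ->
        (exists u, T u /\ t * u = 1) \/ (exists u, T u /\ (1 - t) * u = 1)].

(* lam : A -> E is lambda (x) E for an O-algebra map lambda : T -> O *)
Definition alg_char O (A : comAlgType E) (T : A -> Prop) (lam : {rmorphism A -> E}) :=
  (forall (c : E) (a : A), lam (c *: a) = c * lam a) /\ (forall t, T t -> O (lam t)).

(* e is the idempotent of A corresponding to (1,0) in the decomposition
   A = E x A^c whose first projection is lam *)
Definition lambda_idem (A : comAlgType E) (lam : {rmorphism A -> E}) (e : A) :=
  [/\ e * e = e, lam e = 1 & forall a : A, a * e = lam a *: e].

Definition Tlattice O (A : comAlgType E) (T : A -> Prop) (V : lmodType A)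
    (M : V -> Prop) :=
  is_lattice O (@escale A V) M /\ (forall t m, T t -> M m -> M (t *: m)).

Definition eM (A : comAlgType E) (V : lmodType A) (e : A) (M : V -> Prop) (v : V) :=
  exists m, M m /\ v = e *: m.

(* 0-th Fitting ideal (as a subset of O inside E) of the O-module N / N',
   N' a submodule of N: generators g of N, relation vectors r (with
   \sum r_i g_i in N'), ideal generated by the determinants of n x n matrices
   whose rows are relations. *)
Definition fitting0 O (V : zmodType) (sc : E -> V -> V) (N N' : V -> Prop) (x : E) :=
  exists n (g : 'I_n -> V),
    [/\ (forall i, N (g i)),
        (forall v, N v -> exists c : 'I_n -> E,
            (forall i, O (c i)) /\ v = \sum_i sc (c i) (g i)) &
        exists k (a : 'I_k -> E) (R : 'I_k -> 'M[E]_n),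
          [/\ forall j, O (a j),
              forall j i l, O (R j i l),
              forall j i, N' (\sum_l sc (R j i l) (g l)) &
              x = \sum_j a j * \det (R j)]].

(* C_0^lambda(M) = eM / (eM \cap M) and eta_lambda(M) = Fitt_O(C_0^lambda(M)) *)
Definition eta_lambda O (A : comAlgType E) (V : lmodType A) (e : A) (M : V -> Prop) :=
  fitting0 O (@escale A V) (eM e M) (fun v => eM e M v /\ M v).

Definition Mker (A : comAlgType E) (T : A -> Prop) (lam : {rmorphism A -> E})
    (V : lmodType A) (M : V -> Prop) (m : V) :=
  M m /\ forall t, T t -> lam t = 0 -> t *: m = 0.

Definition free_rank1 O (V : zmodType) (sc : E -> V -> V) (S : V -> Prop) (d : V) :=
  [/\ S d, (forall a, O a -> sc a d = 0 -> a = 0) &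
      forall m, S m -> exists a, O a /\ m = sc a d].

Definition ebilinear (A1 A2 : comAlgType E) (V1 : lmodType A1) (V2 : lmodType A2)
    (pr : V1 -> V2 -> E) :=
  (forall c v v' w, pr (escale c v + v') w = c * pr v w + pr v' w) /\
  (forall c v w w', pr v (escale c w + w') = c * pr v w + pr v w').

Definition perfect_pairing O (A1 A2 : comAlgType E) (V1 : lmodType A1)
    (V2 : lmodType A2) (pr : V1 -> V2 -> E) (M1 : V1 -> Prop) (M2 : V2 -> Prop) :=
  [/\ forall x y, M1 x -> M2 y -> O (pr x y),
      (forall f : V2 -> E,
          (forall a y y', O a -> M2 y -> M2 y' ->
             f (escale a y + y') = a * f y + f y') ->
          (forall y, M2 y -> O (f y)) ->
          exists x, M1 x /\ forall y, M2 y -> f y = pr x y),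
      (forall x, M1 x -> (forall y, M2 y -> pr x y = 0) -> x = 0),
      (forall f : V1 -> E,
          (forall a x x', O a -> M1 x -> M1 x' ->
             f (escale a x + x') = a * f x + f x') ->
          (forall x, M1 x -> O (f x)) ->
          exists y, M2 y /\ forall x, M1 x -> f x = pr x y) &
      (forall y, M2 y -> (forall x, M1 x -> pr x y = 0) -> y = 0)].

(* pr induces a well-defined perfect pairing
   (N1 / (N1 \cap L1)) x (N2 / (N2 \cap L2)) -> E/O, i.e. the maps into
   Hom_O(-, E/O) are well defined, injective and surjective.  Homomorphisms
   N2/(N2 \cap L2) -> E/O are represented by lifts f : N2 -> E. *)
Definition induced_perfect_EmodO O (A1 A2 : comAlgType E) (V1 : lmodType A1)
    (V2 : lmodType A2) (pr : V1 -> V2 -> E)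
    (N1 L1 : V1 -> Prop) (N2 L2 : V2 -> Prop) :=
  [/\
      (forall x y, N1 x -> L1 x -> N2 y -> O (pr x y)),
      (forall x y, N1 x -> N2 y -> L2 y -> O (pr x y)),
      (forall x, N1 x -> (forall y, N2 y -> O (pr x y)) -> L1 x),
      (forall y, N2 y -> (forall x, N1 x -> O (pr x y)) -> L2 y) &
      (forall f : V2 -> E,
          (forall a y y', O a -> N2 y -> N2 y' ->
             O (f (escale a y + y') - (a * f y + f y'))) ->
          (forall y, N2 y -> L2 y -> O (f y)) ->
          exists x, N1 x /\ forall y, N2 y -> O (f y - pr x y)) /\
      (forall f : V1 -> E,
          (forall a x x', O a -> N1 x -> N1 x' ->
             O (f (escale a x + x') - (a * f x + f x'))) ->
          (forall x, N1 x -> L1 x -> O (f x)) ->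
          exists y, N2 y /\ forall x, N1 x -> O (f x - pr x y))].

End Defs.

(* Choose an O-basis b1 of M1; perfectness of the pairing provides the dual family b2,
   an O-basis of M2, in whose coordinates [,] is the standard dot product on E^n.  The
   idempotent e1 then acts by an idempotent matrix Q, and since the orthogonality
   hypotheses make e1 and e2 adjoint, e2 acts by Q^T.  Thus C_0(M1) is
   O^n Q / (O^n Q ∩ O^n), and C_0(M2) is the same module for Q^T.  Over the valuation
   ring O every square matrix has a Smith normal form U D V with U, V invertible over O.
   This shows that the two modules have the same Fitting ideal, and that the lattice dual
   to {z ∈ O^n | z Q^T ∈ O^n} is O^n Q + O^n, which makes the induced E/O-valued pairing
   perfect.  In (b), Q is the rank-one projector z ↦ (z·δ2) δ1 / (δ1·δ2), so that
   C_0(M1) ≅ O / (δ1·δ2). *)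

From HB Require Import structures.
From mathcomp Require Import all_boot all_order all_algebra.
From mathcomp Require Import perm ring.
Set Implicit Arguments. Unset Strict Implicit. Unset Printing Implicit Defensive.
Import Order.TTheory GRing.Theory Num.Theory.
Local Open Scope ring_scope.

Section ValuationRing.
Variables (E : fieldType) (O : E -> Prop).
Hypothesis Osub : subring_of O.

Lemma Opred0 : O 0. Proof. by case: Osub. Qed.
Lemma Opred1 : O 1. Proof. by case: Osub. Qed.
Lemma OpredB x y : O x -> O y -> O (x - y). Proof. by case: Osub => _ _ + _; apply. Qed.
Lemma OpredM x y : O x -> O y -> O (x * y). Proof. by case: Osub => _ _ _; apply. Qed.
Lemma OpredN x : O x -> O (- x).
Proof. by move=> Ox; rewrite -sub0r; apply: OpredB Opred0 Ox. Qed.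
Lemma OpredD x y : O x -> O y -> O (x + y).
Proof. by move=> Ox /OpredN Oy; rewrite -[y]opprK; apply: OpredB. Qed.
Lemma OpredX x k : O x -> O (x ^+ k).
Proof.
by move=> Ox; elim: k => [|k IH]; [rewrite expr0; exact: Opred1 | rewrite exprS; apply: OpredM].
Qed.
Lemma Opred_sum (I : Type) (r : seq I) (P : pred I) (F : I -> E) :
  (forall i, P i -> O (F i)) -> O (\sum_(i <- r | P i) F i).
Proof. by move=> OF; apply: big_ind => //; [exact: Opred0 | exact: OpredD]. Qed.
Lemma Opred_prod (I : Type) (r : seq I) (P : pred I) (F : I -> E) :
  (forall i, P i -> O (F i)) -> O (\prod_(i <- r | P i) F i).
Proof. by move=> OF; apply: big_ind => //; [exact: Opred1 | exact: OpredM]. Qed.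
Lemma Opred_sign (b : bool) : O ((-1) ^+ b).
Proof. by apply: OpredX; apply/OpredN/Opred1. Qed.

Lemma dvr_valuation w : dvr_with_unif O w -> forall x : E, x != 0 -> O x \/ O x^-1.
Proof.
move=> [_ frac Ow [w0 _] unif_fact] x x0.
have [a [b [Oa Ob b0 ex]]] := frac x; subst x.
have a0 : a != 0 by apply: contraNneq x0 => ->; rewrite mul0r.
have [u [m [[Ou u0 Oui] ->]]] := unif_fact a Oa a0.
have [v [k [[Ov v0 Ovi] ->]]] := unif_fact b Ob b0.
have wX0 j : w ^+ j != 0 by rewrite expf_neq0.
case: (leqP k m) => [le_km | lt_mk]; [left | right].
  have -> : u * w ^+ m / (v * w ^+ k) = u * v^-1 * w ^+ (m - k).
    by rewrite -{1}(subnKC le_km) exprD; field; rewrite v0 !wX0.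
  by apply/OpredM/OpredX/Ow; apply: OpredM.
have -> : (u * w ^+ m / (v * w ^+ k))^-1 = v * u^-1 * w ^+ (k - m).
  by rewrite -{1}(subnKC (ltnW lt_mk)) exprD; field; rewrite u0 v0 !wX0.
by apply/OpredM/OpredX/Ow; apply: OpredM.
Qed.

Definition Omx m n (A : 'M[E]_(m, n)) := forall i j, O (A i j).

Definition Ounitmx n (U : 'M[E]_n) :=
  Omx U /\ exists2 U', Omx U' & U *m U' = 1%:M /\ U' *m U = 1%:M.

Lemma Opred_det n (A : 'M[E]_n) : Omx A -> O (\det A).
Proof.
move=> OA; apply: Opred_sum => s _.
by apply: OpredM; [exact: Opred_sign | apply: Opred_prod => i _; apply: OA].
Qed.

Lemma OmxM m n p (A : 'M[E]_(m, n)) (B : 'M[E]_(n, p)) : Omx A -> Omx B -> Omx (A *m B).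
Proof. by move=> OA OB i j; rewrite mxE; apply: Opred_sum => k _; apply: OpredM. Qed.
Lemma OmxD m n (A B : 'M[E]_(m, n)) : Omx A -> Omx B -> Omx (A + B).
Proof. by move=> OA OB i j; rewrite mxE; apply: OpredD. Qed.
Lemma OmxN m n (A : 'M[E]_(m, n)) : Omx A -> Omx (- A).
Proof. by move=> OA i j; rewrite mxE; apply: OpredN. Qed.
Lemma OmxZ m n a (A : 'M[E]_(m, n)) : O a -> Omx A -> Omx (a *: A).
Proof. by move=> Oa OA i j; rewrite mxE; apply: OpredM. Qed.
Lemma Omx0 m n : Omx (0 : 'M[E]_(m, n)).
Proof. by move=> i j; rewrite mxE; exact: Opred0. Qed.
Lemma Omx1 n : Omx (1%:M : 'M[E]_n).
Proof. by move=> i j; rewrite mxE; case: (i == j); [exact: Opred1 | exact: Opred0]. Qed.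
Lemma Omx_tr m n (A : 'M[E]_(m, n)) : Omx A -> Omx A^T.
Proof. by move=> OA i j; rewrite mxE. Qed.
Lemma Omx_delta m n (i : 'I_m) (j : 'I_n) : Omx (delta_mx i j : 'M[E]_(m, n)).
Proof. by move=> k l; rewrite mxE; case: (_ && _); [exact: Opred1 | exact: Opred0]. Qed.
Lemma Omx_perm n (s : 'S_n) : Omx (perm_mx s : 'M[E]_n).
Proof. by rewrite perm_mxEsub => i j; rewrite mxE; exact: (Omx1 (s i) j). Qed.
Lemma Omx_block m1 m2 n1 n2 (A : 'M[E]_(m1, n1)) B C (D : 'M[E]_(m2, n2)) :
  Omx A -> Omx B -> Omx C -> Omx D -> Omx (block_mx A B C D).
Proof.
move=> OA OB OC OD i j; rewrite -(splitK i) -(splitK j).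
by case: (split i) => i'; case: (split j) => j';
  rewrite ?block_mxEul ?block_mxEur ?block_mxEdl ?block_mxEdr.
Qed.
Lemma Omx_adj n (A : 'M[E]_n) : Omx A -> Omx (\adj A).
Proof.
move=> OA i j; rewrite mxE /cofactor -signr_odd.
by apply: OpredM; [exact: Opred_sign | apply: Opred_det => k l; rewrite !mxE].
Qed.

Lemma Ounitmx1 n : Ounitmx (1%:M : 'M[E]_n).
Proof. by split; [exact: Omx1 | exists 1%:M; [exact: Omx1 | rewrite mulmx1]]. Qed.

Lemma OunitmxM n (U V : 'M[E]_n) : Ounitmx U -> Ounitmx V -> Ounitmx (U *m V).
Proof.
move=> [OU [U' OU' [UU' U'U]]] [OV [V' OV' [VV' V'V]]]; split; first exact: OmxM.
exists (V' *m U'); first exact: OmxM.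
by rewrite !mulmxA -(mulmxA U) -(mulmxA V') VV' U'U !mulmx1.
Qed.

Lemma Ounitmx_tr n (U : 'M[E]_n) : Ounitmx U -> Ounitmx U^T.
Proof.
move=> [OU [U' OU' [UU' U'U]]]; split; first exact: Omx_tr.
by exists U'^T; [exact: Omx_tr | rewrite -!trmx_mul UU' U'U trmx1].
Qed.

Lemma Ounitmx_perm n (s : 'S_n) : Ounitmx (perm_mx s : 'M[E]_n).
Proof.
split; first exact: Omx_perm.
by exists (perm_mx s^-1); [exact: Omx_perm | rewrite -!perm_mxM mulgV mulVg perm_mx1].
Qed.

Lemma Ounitmx_block_diag n (U : 'M[E]_n) :
  Ounitmx U -> Ounitmx (block_mx (1%:M : 'M_1) 0 0 U).
Proof.
move=> [OU [U' OU' [UU' U'U]]].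
split; first by apply: Omx_block; [exact: Omx1 | exact: Omx0 | exact: Omx0 |].
exists (block_mx 1%:M 0 0 U').
  by apply: Omx_block; [exact: Omx1 | exact: Omx0 | exact: Omx0 |].
by rewrite !mulmx_block !(mul1mx, mulmx1, mul0mx, mulmx0, addr0, add0r) UU' U'U
  -!scalar_mx_block.
Qed.

Lemma Ounitmx_block_lower n (x : 'cV[E]_n) :
  Omx x -> Ounitmx (block_mx (1%:M : 'M_1) 0 x 1%:M).
Proof.
move=> Ox; split; first by apply: Omx_block; [exact: Omx1 | exact: Omx0 | | exact: Omx1].
exists (block_mx 1%:M 0 (- x) 1%:M).
  by apply: Omx_block; [exact: Omx1 | exact: Omx0 | exact: OmxN | exact: Omx1].
by rewrite !mulmx_block !(mul1mx, mulmx1, mul0mx, mulmx0, addr0, add0r) subrr addNr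
  -!scalar_mx_block.
Qed.

Hypothesis Oval : forall x : E, x != 0 -> O x \/ O x^-1.

Lemma min_valuation_seq (s : seq E) : all (predC1 0) s -> s != [::] ->
  exists2 m, m \in s & forall x, x \in s -> O (x / m).
Proof.
elim: s => [|x s IH] //= /andP[x0 s0] _.
have [-> | s_neq0] := eqVneq s [::].
  by exists x => [|y]; rewrite ?mem_seq1 // => /eqP->; rewrite divff //; exact: Opred1.
have [m ms m_min] := IH s0 s_neq0.
have m0 : m != 0 by move/allP: s0 => /(_ m ms).
have [Oxm | Omxi] := Oval (mulf_neq0 x0 (invr_neq0 m0)).
  by exists m => [|y]; rewrite inE ?ms ?orbT // => /predU1P[->|/m_min].
exists x => [|y]; rewrite inE ?eqxx // => /predU1P[->|ys].
  by rewrite divff //; exact: Opred1.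
by rewrite -(divfK m0 y) -[_ * m / x]mulrA; apply: OpredM; [exact: m_min | rewrite -invf_div].
Qed.

Lemma exists_min_valuation (T : finType) (F : T -> E) : (exists t, F t != 0) ->
  exists t, F t != 0 /\ forall u, O (F u / F t).
Proof.
move=> [t0 Ft0].
pose s := [seq F t | t <- enum T & F t != 0].
have s0 : all (predC1 0) s by apply/allP => _ /mapP[t + ->]; rewrite mem_filter => /andP[].
have s_neq0 : s != [::].
  apply/eqP => s_nil; have : F t0 \in s by rewrite map_f // mem_filter Ft0 mem_enum.
  by rewrite s_nil.
have [_ /mapP[t + ->] t_min] := min_valuation_seq s0 s_neq0.
rewrite mem_filter => /andP[Ft _]; exists t; split => // u.
have [-> | Fu] := eqVneq (F u) 0; first by rewrite mul0r; exact: Opred0.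
by apply: t_min; apply: map_f; rewrite mem_filter Fu mem_enum.
Qed.

Lemma exists_common_denominator (T : finType) (F : T -> E) :
  exists2 c, c != 0 & forall t, O (c * F t).
Proof.
have [/existsP/exists_min_valuation [t [Ft t_min]] | ] := boolP [exists t, F t != 0].
  have [OFt | OFti] := Oval Ft; last by exists (F t)^-1 => [|u]; rewrite ?invr_eq0 // mulrC.
  by exists 1 => [|u]; rewrite ?oner_eq0 // mul1r -(divfK Ft (F u)); apply: OpredM.
rewrite negb_exists => /forallP F0; exists 1 => [|u]; first exact: oner_neq0.
by move/negPn/eqP: (F0 u) ->; rewrite mulr0; exact: Opred0.
Qed.

Lemma pivot_decomposition n (Q : 'M[E]_(1 + n)) : Q 0 0 != 0 ->
  (forall i j, O (Q i j / Q 0 0)) ->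
  exists L R S, [/\ Ounitmx L, Ounitmx R & Q = L *m block_mx (Q 0 0)%:M 0 0 S *m R].
Proof.
set a := Q 0 0 => a0 Q_min.
have ulQ : ulsubmx Q = a%:M.
  have l0 : lshift n (0 : 'I_1) = 0 by apply: val_inj.
  by rewrite [LHS]mx11_scalar !mxE l0.
pose x := a^-1 *: dlsubmx Q; pose y := a^-1 *: ursubmx Q.
have Ox : Omx x by move=> i j; rewrite !mxE mulrC.
have Oy : Omx y^T by move=> i j; rewrite !mxE mulrC.
exists (block_mx 1%:M 0 x 1%:M), (block_mx 1%:M 0 y^T 1%:M)^T, (drsubmx Q - x *m ursubmx Q).
split; [exact: Ounitmx_block_lower | exact/Ounitmx_tr/Ounitmx_block_lower |].
rewrite tr_block_mx trmxK !trmx1 trmx0 !mulmx_block.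
rewrite !(mul1mx, mulmx1, mul0mx, mulmx0, addr0, add0r) mul_scalar_mx mul_mx_scalar.
rewrite /x /y !scalerA mulfV // !scale1r -scalemxAl -scalemxAr.
by rewrite addrC subrK -ulQ submxK.
Qed.

Lemma smith_normal_form n (Q : 'M[E]_n) :
  exists U d V, [/\ Ounitmx U, Ounitmx V & Q = U *m diag_mx d *m V].
Proof.
elim: n Q => [|n IH] Q.
  exists 1%:M, 0, 1%:M; split; [exact: Ounitmx1 | exact: Ounitmx1 |].
  by rewrite [LHS]flatmx0 [RHS]flatmx0.
have [-> | Q_neq0] := eqVneq Q 0.
  exists 1%:M, 0, 1%:M; split; [exact: Ounitmx1 | exact: Ounitmx1 |].
  by rewrite raddf0 mulmx0 mul0mx.
have [[i0 j0] [Qij0 Q_min]] : exists t : 'I_n.+1 * 'I_n.+1,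
    Q t.1 t.2 != 0 /\ forall u : 'I_n.+1 * 'I_n.+1, O (Q u.1 u.2 / Q t.1 t.2).
  apply: (@exists_min_valuation _ (fun t : _ * _ => Q t.1 t.2)).
  apply/existsP; apply: contraNT Q_neq0; rewrite negb_exists => /forallP Q0.
  by apply/eqP/matrixP => i j; rewrite mxE; move/negPn/eqP: (Q0 (i, j)).
pose Q1 : 'M_(1 + n) := tperm_mx 0 i0 *m Q *m tperm_mx 0 j0.
have Q1E k l : Q1 k l = Q (tperm 0 i0 k) (tperm 0 j0 l).
  by rewrite /Q1 -xrowE -xcolE !mxE.
have tperm_mxK (i j : 'I_n.+1) : tperm_mx i j *m tperm_mx i j = 1%:M :> 'M[E]_n.+1.
  by rewrite -perm_mxM tperm2 perm_mx1.
have QE : Q = tperm_mx 0 i0 *m Q1 *m tperm_mx 0 j0.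
  by rewrite !mulmxA tperm_mxK mul1mx -mulmxA tperm_mxK mulmx1.
have Q1_00 : Q1 0 0 = Q i0 j0 by rewrite Q1E !tpermL.
have Q1_min i j : O (Q1 i j / Q1 0 0) by rewrite Q1_00 Q1E; apply: (Q_min (_, _)).
have Q1_00_neq0 : Q1 0 0 != 0 by rewrite Q1_00.
have [L [R [S [UL UR Q1E']]]] := pivot_decomposition Q1_00_neq0 Q1_min.
have [U1 [d1 [V1 [UU1 UV1 SE]]]] := IH S.
exists (tperm_mx 0 i0 *m L *m block_mx 1%:M 0 0 U1), (row_mx (Q1 0 0)%:M d1),
  (block_mx 1%:M 0 0 V1 *m R *m tperm_mx 0 j0); split.
- by apply/OunitmxM/Ounitmx_block_diag/UU1; apply/OunitmxM/UL/Ounitmx_perm.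
- by apply/OunitmxM/Ounitmx_perm; apply/OunitmxM/UR/Ounitmx_block_diag.
have diag11 (b : E) : diag_mx (b%:M : 'rV_1) = b%:M.
  by apply/matrixP => i j; rewrite !ord1 !mxE.
rewrite QE; move: Q1E'; set a := Q1 0 0 => ->.
rewrite (diag_mx_row a%:M d1) diag11 SE.
have -> : block_mx (a%:M : 'M_1) 0 0 (U1 *m diag_mx d1 *m V1) =
    block_mx (1%:M : 'M_1) 0 0 U1 *m block_mx (a%:M : 'M_1) 0 0 (diag_mx d1) *m
    block_mx (1%:M : 'M_1) 0 0 V1.
  by rewrite !mulmx_block !(mul1mx, mulmx1, mul0mx, mulmx0, addr0, add0r).
by rewrite !mulmxA.
Qed.

Lemma fitting0_iso (V V' : zmodType) (sc : E -> V -> V) (sc' : E -> V' -> V')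
    (f : V -> V') (N N' : V -> Prop) (N2 N2' : V' -> Prop) :
  (forall x y, f (x + y) = f x + f y) -> (forall c x, f (sc c x) = sc' c (f x)) ->
  injective f -> (forall v', N2 v' -> exists v, v' = f v) ->
  (forall v, N v <-> N2 (f v)) -> (forall v, N' v <-> N2' (f v)) ->
  forall x, fitting0 O sc N N' x <-> fitting0 O sc' N2 N2' x.
Proof.
move=> fD fZ f_inj f_onto NE N'E x.
have f0 : f 0 = 0 by apply: (addIr (f 0)); rewrite -fD !add0r.
have f_sum k (c : 'I_k -> E) g : f (\sum_i sc (c i) (g i)) = \sum_i sc' (c i) (f (g i)).
  by rewrite (big_morph f fD f0); apply: eq_bigr => i _; exact: fZ.
split=> [[k [g [Ng g_gen [m [a [R [Oa OR rel ->]]]]]]] |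
         [k [g' [Ng' g'_gen [m [a [R [Oa OR rel ->]]]]]]]].
  exists k, (f \o g); split; first by move=> i; apply/NE.
  - move=> _ /[dup] /f_onto [v ->] /NE /g_gen [c [Oc ->]].
    by exists c; rewrite f_sum.
  - by exists m, a, R; split => // j i; rewrite /= -f_sum; apply/N'E.
have [g g'E] : exists g : 'I_k -> V, forall i, g' i = f (g i).
  by apply: (@fin_all_exists _ (fun=> V) (fun i v => g' i = f v)) => i; apply: f_onto.
exists k, g; split; first by move=> i; apply/NE; rewrite -g'E.
- move=> v /NE /g'_gen [c [Oc vE]]; exists c; split => //; apply: f_inj.
  by rewrite vE f_sum; under eq_bigr do rewrite g'E.
- exists m, a, R; split => // j i; apply/N'E; rewrite f_sum.
  by under eq_bigr do rewrite -g'E.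
Qed.

Definition dotmx n (x y : 'rV[E]_n) := \sum_i x 0 i * y 0 i.

Lemma dotmxE n (x y : 'rV[E]_n) : dotmx x y = (x *m y^T) 0 0.
Proof. by rewrite mxE; apply: eq_bigr => i _; rewrite mxE. Qed.
Lemma dotmxC n (x y : 'rV[E]_n) : dotmx x y = dotmx y x.
Proof. by apply: eq_bigr => i _; rewrite mulrC. Qed.
Lemma dotmx_mulmxl n (x y : 'rV[E]_n) A : dotmx (x *m A) y = dotmx x (y *m A^T).
Proof. by rewrite !dotmxE trmx_mul trmxK mulmxA. Qed.
Lemma dotmxBr n (x y z : 'rV[E]_n) : dotmx x (y - z) = dotmx x y - dotmx x z.
Proof. by rewrite /dotmx -sumrB; apply: eq_bigr => i _; rewrite !mxE mulrBr. Qed.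
Lemma dotmxZl n a (x y : 'rV[E]_n) : dotmx (a *: x) y = a * dotmx x y.
Proof. by rewrite /dotmx mulr_sumr; apply: eq_bigr => i _; rewrite mxE mulrA. Qed.
Lemma dotmx_delta n (x : 'rV[E]_n) j : dotmx x (delta_mx 0 j) = x 0 j.
Proof.
rewrite /dotmx (bigD1 j) //= big1 ?addr0 => [|i /negbTE ij]; rewrite mxE ?eqxx ?mulr1 //.
by rewrite ij andbF mulr0.
Qed.
Lemma Opred_dotmx n (x y : 'rV[E]_n) : Omx x -> Omx y -> O (dotmx x y).
Proof. by move=> Ox Oy; apply: Opred_sum => i _; apply: OpredM. Qed.

Lemma adjoint_mx n (P P' : 'M[E]_n) :
  (forall x y, Omx x -> Omx y -> dotmx (x *m P) y = dotmx x (y *m P')) -> P' = P^T.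
Proof.
move=> P_adj; apply/matrixP => i j.
have := P_adj _ _ (Omx_delta 0 j) (Omx_delta 0 i).
by rewrite dotmx_delta dotmxC dotmx_delta -!rowE !mxE => ->.
Qed.

Definition rowO n (Q : 'M[E]_n) (v : 'rV_n) := exists2 z, Omx z & v = z *m Q.

(* For the matrix Q of e acting on M in coordinates, this is η_λ(M). *)
Definition fittingmx n (Q : 'M[E]_n) :=
  fitting0 O *:%R (rowO Q) (fun v => rowO Q v /\ Omx v).

Lemma rowO0 n (Q : 'M[E]_n) : rowO Q 0.
Proof. by exists 0; [exact: Omx0 | rewrite mul0mx]. Qed.

Lemma rowO_comb n (Q : 'M[E]_n) a y y' : O a -> rowO Q y -> rowO Q y' -> rowO Q (a *: y + y').
Proof.
move=> Oa [z Oz ->] [z' Oz' ->]; exists (a *: z + z'); last by rewrite mulmxDl scalemxAl.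
by apply: OmxD => //; apply: OmxZ.
Qed.

Lemma fittingmx_unit_l n (U Q : 'M[E]_n) x : Ounitmx U -> fittingmx (U *m Q) x <-> fittingmx Q x.
Proof.
move=> [OU [U' OU' [_ U'U]]].
have rowOE v : rowO (U *m Q) v <-> rowO Q v.
  split=> [[z Oz ->] | [z Oz ->]]; first by exists (z *m U); rewrite ?mulmxA //; exact: OmxM.
  by exists (z *m U'); [exact: OmxM | rewrite mulmxA -(mulmxA z) U'U mulmx1].
apply: (@fitting0_iso _ _ _ _ id) => // [v' _ | v]; first by exists v'.
by rewrite /= rowOE.
Qed.

Lemma fittingmx_unit_r n (V Q : 'M[E]_n) x : Ounitmx V -> fittingmx Q x <-> fittingmx (Q *m V) x.
Proof.
move=> [OV [V' OV' [VV' _]]].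
have mulV_inj : injective (fun v : 'rV_n => v *m V).
  by apply: (can_inj (g := fun v => v *m V')) => v; rewrite -mulmxA VV' mulmx1.
have rowOE v : rowO Q v <-> rowO (Q *m V) (v *m V).
  split=> [[z Oz ->] | [z Oz]]; first by exists z; rewrite ?mulmxA.
  by rewrite mulmxA => /mulV_inj ->; exists z.
apply: (@fitting0_iso _ _ _ _ (fun v => v *m V)) => //.
- by move=> x1 x2; rewrite mulmxDl.
- by move=> c v; rewrite scalemxAl.
- by move=> _ [z Oz ->]; exists (z *m Q); rewrite mulmxA.
- move=> v; rewrite /= rowOE; split=> -[rv Ov]; split=> //; first exact: OmxM.
  by rewrite -(mulmx1 v) -VV' mulmxA; exact: OmxM.
Qed.

Lemma fittingmx_tr n (Q : 'M[E]_n) x : fittingmx Q x <-> fittingmx Q^T x.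
Proof.
have [U [d [V [UU UV ->]]]] := smith_normal_form Q.
have [UUt UVt] := (Ounitmx_tr UU, Ounitmx_tr UV).
rewrite !trmx_mul tr_diag_mx -mulmxA (fittingmx_unit_l _ _ UU) (fittingmx_unit_l _ _ UVt).
by rewrite -(fittingmx_unit_r _ _ UV) -(fittingmx_unit_r _ _ UUt).
Qed.

Lemma Opred_dotmx_rowO n (Q : 'M[E]_n) x y : Q *m Q = Q ->
  rowO Q x -> Omx x -> rowO Q^T y -> O (dotmx x y).
Proof.
move=> QQ [z _ xE] Ox [z' Oz' ->].
by rewrite -dotmx_mulmxl xE -mulmxA QQ -xE; exact: Opred_dotmx.
Qed.

Lemma rowO_dual_Omx n (Q : 'M[E]_n) x : Q *m Q = Q -> rowO Q x ->
  (forall y, rowO Q^T y -> O (dotmx x y)) -> Omx x.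
Proof.
move=> QQ [z _ xE] x_dual i j; rewrite (ord1 i).
have := x_dual (delta_mx 0 j *m Q^T) (ex_intro2 _ _ _ (Omx_delta 0 j) erefl).
by rewrite -dotmx_mulmxl xE -mulmxA QQ -xE dotmx_delta.
Qed.

Lemma dual_lattice_diag n (d k : 'rV[E]_n) :
  (forall u, Omx u -> Omx (u *m diag_mx d) -> O (dotmx u k)) ->
  exists2 s, Omx s & Omx (s *m diag_mx d - k).
Proof.
move=> k_dual.
have delta_diag i : delta_mx 0 i *m diag_mx d = d 0 i *: delta_mx 0 i.
  apply/matrixP => i0 j; rewrite mul_mx_diag !mxE mulrC.
  by case: (j =P i) => [<- | _]; rewrite ?andbF ?mulr0.
have [s Os] : exists s : 'I_n -> E, forall i, O (s i) /\ O (s i * d 0 i - k 0 i).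
  apply: (@fin_all_exists _ (fun=> E) (fun i si => O si /\ O (si * d 0 i - k 0 i))) => i.
  have Ok_of_Od : O (d 0 i) -> exists si, O si /\ O (si * d 0 i - k 0 i).
    move=> Od; exists 0; rewrite mul0r sub0r; split; first exact: Opred0.
    apply: OpredN; rewrite -(dotmx_delta k) dotmxC; apply: k_dual; first exact: Omx_delta.
    by rewrite delta_diag; apply: OmxZ Od (Omx_delta _ _).
  have [d0 | d_neq0] := eqVneq (d 0 i) 0; first by apply: Ok_of_Od; rewrite d0; exact: Opred0.
  have [Od | Odi] := Oval d_neq0; first exact: Ok_of_Od.
  exists (k 0 i / d 0 i); rewrite divfK // subrr; split; last exact: Opred0.
  rewrite mulrC -(dotmx_delta k) dotmxC -dotmxZl.
  apply: k_dual; first exact: OmxZ (Omx_delta _ _).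
  by rewrite -scalemxAl delta_diag scalerA mulVf // scale1r; exact: Omx_delta.
exists (\row_i s i); first by move=> i j; rewrite mxE; case: (Os j).
by move=> i j; rewrite ord1 mul_mx_diag !mxE; case: (Os j).
Qed.

Lemma dual_lattice_mx n (Q : 'M[E]_n) (h : 'rV_n) :
  (forall z, Omx z -> Omx (z *m Q^T) -> O (dotmx z h)) ->
  exists2 t, Omx t & Omx (t *m Q - h).
Proof.
move=> h_dual.
have [U [d [V [[OU [U' OU' [UU' U'U]]] [OV [V' OV' [VV' V'V]]] QE]]]] := smith_normal_form Q.
have [|s Os Osk] := @dual_lattice_diag n d (h *m V').
  move=> u Ou Oud; rewrite -(trmxK V') -dotmx_mulmxl.
  apply: h_dual; first exact/OmxM/Omx_tr.
  rewrite QE !trmx_mul tr_diag_mx !mulmxA -(mulmxA u) -trmx_mul VV' trmx1 mulmx1.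
  exact/OmxM/Omx_tr.
exists (s *m U'); first exact: OmxM.
suff -> : s *m U' *m Q - h = (s *m diag_mx d - h *m V') *m V by exact: OmxM.
by rewrite mulmxBl -(mulmxA h) V'V mulmx1 QE !mulmxA -(mulmxA s) U'U mulmx1.
Qed.

Lemma modO_linear_sum n (N : 'rV[E]_n -> Prop) (f : 'rV_n -> E) (I : Type) (r : seq I)
    (c : I -> E) (g : I -> 'rV_n) :
  N 0 -> (forall a y y', O a -> N y -> N y' -> N (a *: y + y')) ->
  (forall a y y', O a -> N y -> N y' -> O (f (a *: y + y') - (a * f y + f y'))) ->
  (forall i, O (c i)) -> (forall i, N (g i)) ->
  N (\sum_(i <- r) c i *: g i) /\
  O (f (\sum_(i <- r) c i *: g i) - \sum_(i <- r) c i * f (g i)).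
Proof.
move=> N0 N_comb f_lin Oc Ng; elim: r => [|i r [N_sum IH]].
  rewrite !big_nil; split => //.
  have := f_lin 1 0 0 Opred1 N0 N0; rewrite scale1r addr0 mul1r subr0.
  by rewrite opprD addrA subrr sub0r => /OpredN; rewrite opprK.
rewrite !big_cons; split; first exact: N_comb.
set S := \sum_(j <- r) c j *: g j; set fS := \sum_(j <- r) _.
have -> : f (c i *: g i + S) - (c i * f (g i) + fS) =
    f (c i *: g i + S) - (c i * f (g i) + f S) + (f S - fS) by ring.
by apply: OpredD IH; apply: f_lin.
Qed.

Lemma modO_linear_dotmx n (Q : 'M[E]_n) (f : 'rV_n -> E) : Q *m Q = Q ->
  (forall a y y', O a -> rowO Q^T y -> rowO Q^T y' -> O (f (a *: y + y') - (a * f y + f y'))) ->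
  (forall y, rowO Q^T y -> Omx y -> O (f y)) ->
  exists2 x, rowO Q x & forall y, rowO Q^T y -> O (f y - dotmx x y).
Proof.
move=> QQ f_lin f_int.
pose h := \row_j f (delta_mx 0 j *m Q^T).
have f_comb z : Omx z -> O (f (z *m Q^T) - dotmx z h).
  move=> Oz; have rowO_delta i : rowO Q^T (delta_mx 0 i *m Q^T).
    by exists (delta_mx 0 i); first exact: Omx_delta.
  have zQE : z *m Q^T = \sum_i z 0 i *: (delta_mx 0 i *m Q^T).
    by rewrite mulmx_sum_row; apply: eq_bigr => i _; rewrite rowE.
  have dotE : dotmx z h = \sum_i z 0 i * f (delta_mx 0 i *m Q^T).
    by apply: eq_bigr => i _; rewrite mxE.
  rewrite zQE dotE.
  by case: (modO_linear_sum (index_enum 'I_n) (rowO0 Q^T) (@rowO_comb _ Q^T) f_lin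
    (fun i => Oz 0 i) rowO_delta).
have [t Ot Oth] : exists2 t, Omx t & Omx (t *m Q - h).
  apply: dual_lattice_mx => z Oz OzQ; rewrite -[dotmx z h](subKr (f (z *m Q^T))).
  apply: OpredB (f_comb z Oz); apply: f_int OzQ; by exists z.
exists (t *m Q); first by exists t.
move=> _ [z Oz ->].
rewrite dotmxC dotmx_mulmxl trmxK -mulmxA QQ.
have -> : dotmx z (t *m Q) = dotmx z h + dotmx z (t *m Q - h) by rewrite dotmxBr addrC subrK.
by rewrite opprD addrA; apply: OpredB (f_comb z Oz) (Opred_dotmx Oz Oth).
Qed.

Lemma Opred_det_div k (R : 'M[E]_k) (bt : 'rV[E]_k) (c : 'cV[E]_k) s : s != 0 ->
  Omx R -> Omx bt -> bt *m c = 1 -> Omx (s^-1 *: (R *m c)) -> O (\det R / s).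
Proof.
move=> s0 OR Obt btc ORc.
have -> : \det R / s = (bt *m \adj R *m (s^-1 *: (R *m c))) 0 0.
  rewrite -scalemxAr mulmxA -(mulmxA bt) mul_adj_mx mul_mx_scalar -scalemxAl btc.
  by rewrite !mxE eqxx mulr1 mulrC.
by apply: OmxM => //; apply: OmxM => //; exact: Omx_adj.
Qed.

Lemma fitting0_cyclic (V : lmodType E) (N N' : V -> Prop) (g : V) (s : E) :
  g != 0 -> s != 0 -> O s ->
  (forall v, N v <-> exists2 b, O b & v = b *: g) ->
  (forall v, N' v <-> exists2 b, O (b / s) & v = b *: g) ->
  forall x, fitting0 O *:%R N N' x <-> exists a, O a /\ x = a * s.
Proof.
move=> g_neq0 s_neq0 Os NE N'E x.
have scalegI b b' : b *: g = b' *: g -> b = b'.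
  by move/eqP; rewrite -subr_eq0 -scalerBl scaler_eq0 (negbTE g_neq0) orbF subr_eq0 => /eqP.
split=> [[k [gg [Ngg gg_gen [m [a [R [Oa OR rel ->]]]]]]] | [a [Oa ->]]]; last first.
  exists 1, (fun=> g); split.
  - by move=> _; apply/NE; exists 1; rewrite ?scale1r //; exact: Opred1.
  - by move=> v /NE [b Ob ->]; exists (fun=> b); rewrite big_ord1.
  exists 1, (fun=> a), (fun=> s%:M); split => //.
  - by move=> _ i l; rewrite !ord1 mxE mulr1n.
  - move=> _ i; rewrite big_ord1 !ord1 mxE mulr1n; apply/N'E.
    by exists s; rewrite ?divff //; exact: Opred1.
  - by rewrite big_ord1 det_scalar1.
have [c cE] : exists c : 'I_k -> E, forall i, O (c i) /\ gg i = c i *: g.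
  apply: (@fin_all_exists _ (fun=> E) (fun i ci => O ci /\ gg i = ci *: g)) => i.
  by have /NE [b Ob ->] := Ngg i; exists b.
have [bt [Obt gE]] := gg_gen g (proj2 (NE g) (ex_intro2 _ _ 1 Opred1 (esym (scale1r g)))).
have comb_gg (d : 'I_k -> E) : \sum_i d i *: gg i = (\sum_i d i * c i) *: g.
  by rewrite scaler_suml; apply: eq_bigr => i _; rewrite (proj2 (cE i)) scalerA.
pose cc := \col_i c i.
have btc : \row_i bt i *m cc = 1.
  rewrite [LHS]mx11_scalar mxE; congr (_%:M); apply: scalegI.
  by rewrite scale1r {2}gE comb_gg; congr (_ *: _); apply: eq_bigr => l _; rewrite !mxE.
exists (\sum_j a j * (\det (R j) / s)); rewrite mulr_suml; split.
  apply: Opred_sum => j _; apply: OpredM (Oa j) _.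
  apply: (Opred_det_div s_neq0 (OR j) _ btc); first by move=> i l; rewrite mxE.
  move=> i o; rewrite (ord1 o) !mxE mulrC.
  have /N'E [b Obs] := rel j i; rewrite comb_gg => /scalegI bE.
  by under eq_bigr do rewrite mxE; rewrite bE.
by apply: eq_bigr => j _; rewrite -mulrA divfK.
Qed.

(* The coordinates of an O-basis of M[ker λ] = {m ∈ M | e m = m}. *)
Definition fixed_basis n (Q : 'M[E]_n) (z : 'rV_n) :=
  [/\ Omx z, z *m Q = z, z != 0 &
      forall m, Omx m -> m *m Q = m -> exists2 a, O a & m = a *: z].

Lemma fixed_basis_unit_entry n (Q : 'M[E]_n) z : fixed_basis Q z ->
  exists j, z 0 j != 0 /\ O (z 0 j)^-1.
Proof.
case=> Oz zQ z_neq0 z_gen.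
have [j [zj z_min]] : exists j, z 0 j != 0 /\ forall i, O (z 0 i / z 0 j).
  apply: (@exists_min_valuation _ (z 0)); apply/existsP; apply: contraNT z_neq0.
  by rewrite negb_exists => /forallP z0; apply/eqP/rowP => i; rewrite mxE; apply/eqP/negPn.
exists j; split => //.
have Oz' : Omx ((z 0 j)^-1 *: z) by move=> i l; rewrite (ord1 i) mxE mulrC.
have z'Q : ((z 0 j)^-1 *: z) *m Q = (z 0 j)^-1 *: z by rewrite -scalemxAl zQ.
have [a Oa zE] := z_gen _ Oz' z'Q.
have : ((z 0 j)^-1 - a) *: z = 0 by rewrite scalerBl -zE subrr.
by move/eqP; rewrite scaler_eq0 (negbTE z_neq0) orbF subr_eq0 => /eqP ->.
Qed.

Lemma idempotent_rank1 n (Q : 'M[E]_n) z : Q *m Q = Q -> fixed_basis Q^T z ->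
  exists r : 'rV_n, forall y, y *m Q = dotmx y z *: r.
Proof.
move=> QQ [_ _ _ z_gen].
have [rf QtE] : exists rf : 'I_n -> E, forall i, row i Q^T = rf i *: z.
  apply: (@fin_all_exists _ (fun=> E) (fun i r => row i Q^T = r *: z)) => i.
  have [c c_neq0 Oc] := exists_common_denominator (row i Q^T 0).
  have Ocrow : Omx (c *: row i Q^T) by move=> i' l; rewrite (ord1 i') mxE.
  have crowQ : c *: row i Q^T *m Q^T = c *: row i Q^T.
    by rewrite -scalemxAl -row_mul -trmx_mul QQ.
  have [a Oa cE] := z_gen _ Ocrow crowQ.
  by exists (c^-1 * a); rewrite -scalerA -cE scalerA mulVf // scale1r.
exists (\row_l rf l) => y; apply/rowP => l; rewrite !mxE mulr_suml.
apply: eq_bigr => k _; have /rowP/(_ k) := QtE l.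
by rewrite !mxE => ->; rewrite mulrCA mulrC.
Qed.

Lemma fittingmx_rank1 n (Q : 'M[E]_n) z1 z2 : Q *m Q = Q ->
  fixed_basis Q z1 -> fixed_basis Q^T z2 ->
  forall x, fittingmx Q x <-> exists a, O a /\ x = a * dotmx z1 z2.
Proof.
move=> QQ z1B z2B; have [r QE] := idempotent_rank1 QQ z2B.
have [[Oz1 z1Q z1_neq0 _] [Oz2 _ _ _]] := (z1B, z2B).
have [[j1 [z1j1 Oz1i]] [j2 [z2j2 Oz2i]]] :=
  (fixed_basis_unit_entry z1B, fixed_basis_unit_entry z2B).
set s := dotmx z1 z2.
have z1E : z1 = s *: r by rewrite -{1}z1Q QE.
have s_neq0 : s != 0 by apply: contraNneq z1_neq0 => s0; rewrite z1E s0 scale0r.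
have r_neq0 : r != 0 by apply: contraNneq z1_neq0 => r0; rewrite z1E r0 scaler0.
have Os : O s by exact: Opred_dotmx.
have rowOE v : rowO Q v <-> exists2 b, O b & v = b *: r.
  split=> [[z Oz ->] | [b Ob ->]]; first by exists (dotmx z z2); [exact: Opred_dotmx | rewrite QE].
  exists ((b / z2 0 j2) *: delta_mx 0 j2); first by apply/OmxZ/Omx_delta/OpredM.
  by rewrite QE dotmxZl dotmxC dotmx_delta divfK.
apply: (fitting0_cyclic r_neq0 s_neq0 Os rowOE) => v.
split=> [[/rowOE [b Ob ->] Obr] | [b Obs ->]].
  exists b => //; rewrite -[b / s](mulfK z1j1); apply: OpredM _ Oz1i.
  by rewrite z1E mxE mulrA divfK //; have := Obr 0 j1; rewrite mxE.
have -> : b *: r = (b / s) *: z1 by rewrite z1E scalerA divfK.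
split; last by apply: OmxZ.
apply/rowOE; exists b; last by rewrite z1E scalerA divfK.
by rewrite -(divfK s_neq0 b); apply: OpredM.
Qed.

Section Coordinates.
Variables (A : comAlgType E) (V : lmodType A).
Local Notation escale := (@escale E A V).

Lemma escaleDr c : {morph escale c : x y / x + y}.
Proof. by move=> x y; rewrite /escale scalerDr. Qed.
Lemma escaleDl c d (x : V) : escale (c + d) x = escale c x + escale d x.
Proof. by rewrite /escale !scalerDl. Qed.
Lemma escale0r c : escale c 0 = 0.
Proof. by rewrite /escale scaler0. Qed.
Lemma escale1 (x : V) : escale 1 x = x.
Proof. by rewrite /escale !scale1r. Qed.
Lemma escaleA c d (x : V) : escale c (escale d x) = escale (c * d) x.
Proof. by rewrite /escale scalerA mulr_algl scalerA. Qed.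
Lemma escaleN1 (x : V) : escale (-1) x = - x.
Proof. by rewrite /escale !scaleN1r. Qed.
Lemma escale_act (t : A) c (x : V) : t *: escale c x = escale c (t *: x).
Proof. by rewrite /escale !scalerA mulrC. Qed.
Lemma escaleK c (x : V) : c != 0 -> escale c^-1 (escale c x) = x.
Proof. by move=> c0; rewrite escaleA mulVf // escale1. Qed.

Definition lcomb n (b : 'I_n -> V) (z : 'rV[E]_n) := \sum_i escale (z 0 i) (b i).

Lemma lcombD n (b : 'I_n -> V) : {morph lcomb b : x y / x + y}.
Proof.
by move=> x y; rewrite /lcomb -big_split; apply: eq_bigr => i _; rewrite mxE escaleDl.
Qed.
Lemma lcombZ n (b : 'I_n -> V) c x : lcomb b (c *: x) = escale c (lcomb b x).
Proof.
rewrite /lcomb (big_morph _ (escaleDr c) (escale0r c)).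
by apply: eq_bigr => i _; rewrite mxE escaleA.
Qed.
Lemma lcomb0 n (b : 'I_n -> V) : lcomb b 0 = 0.
Proof. by rewrite -(scale0r 0) lcombZ /escale !scale0r. Qed.
Lemma lcomb_delta n (b : 'I_n -> V) j : lcomb b (delta_mx 0 j) = b j.
Proof.
rewrite /lcomb (bigD1 j) //= big1 ?addr0 => [|i /negbTE ij]; rewrite mxE ?eqxx ?escale1 //.
by rewrite ij /escale !scale0r.
Qed.
Lemma lcomb_sum n (b : 'I_n -> V) (I : Type) (r : seq I) (c : I -> E) (z : I -> 'rV_n) :
  lcomb b (\sum_(i <- r) c i *: z i) = \sum_(i <- r) escale (c i) (lcomb b (z i)).
Proof.
by rewrite (big_morph _ (lcombD b) (lcomb0 b)); apply: eq_bigr => i _; apply: lcombZ.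
Qed.
Lemma lcomb_mulmx n (b : 'I_n -> V) z (B : 'M_n) :
  lcomb b (z *m B) = \sum_i escale (z 0 i) (lcomb b (row i B)).
Proof. by rewrite mulmx_sum_row lcomb_sum. Qed.

Definition lattice_basis (M : V -> Prop) n (b : 'I_n -> V) :=
  [/\ injective (lcomb b), forall v, exists z, v = lcomb b z &
      forall z, M (lcomb b z) <-> Omx z].

Lemma lattice_basis_exists (M : V -> Prop) : is_lattice O escale M ->
  exists n (b : 'I_n -> V), lattice_basis M b.
Proof.
move=> [n [b [b_span b_free M_coord]]]; exists n, b.
have lcombE (z : 'rV_n) : lcomb b z = \sum_i escale (z 0 i) (b i) by [].
split.
- move=> x y xy; apply/rowP => i; apply/eqP; rewrite -subr_eq0; apply/eqP; move: i.
  apply: b_free; transitivity (lcomb b x - lcomb b y); last by rewrite xy subrr.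
  by rewrite /lcomb -sumrB; apply: eq_bigr => k _; rewrite escaleDl /escale !scaleNr.
- move=> v; have [c ->] := b_span v; exists (\row_i c i).
  by apply: eq_bigr => i _; rewrite mxE.
- move=> z; rewrite lcombE M_coord; split=> Oz i; first by move=> j; rewrite (ord1 i).
  exact: Oz.
Qed.

Section LatticeBasis.
Variables (M : V -> Prop) (n : nat) (b : 'I_n -> V).
Hypothesis Mb : lattice_basis M b.

Lemma lattice_basis_coord v : M v -> exists2 z, Omx z & v = lcomb b z.
Proof.
by case: Mb => _ surj Mcoord Mv; have [z vE] := surj v; exists z; rewrite // -Mcoord -vE.
Qed.

Lemma lattice_basis_comb a x y : O a -> M x -> M y -> M (escale a x + y).
Proof.
case: Mb => _ _ Mcoord Oa /lattice_basis_coord [z Oz ->] /lattice_basis_coord [z' Oz' ->].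
by rewrite -lcombZ -lcombD Mcoord; apply: OmxD => //; apply: OmxZ.
Qed.

Lemma lattice_basis_mem j : M (b j).
Proof. by case: Mb => _ _ Mcoord; rewrite -lcomb_delta Mcoord; exact: Omx_delta. Qed.

Lemma lattice_basis_action (t : A) :
  exists Q : 'M[E]_n, forall z, t *: lcomb b z = lcomb b (z *m Q).
Proof.
case: Mb => _ surj _.
have [q qE] : exists q : 'I_n -> 'rV_n, forall i, t *: b i = lcomb b (q i).
  by apply: (@fin_all_exists _ (fun=> 'rV_n) (fun i q => t *: b i = lcomb b q)) => i.
exists (\matrix_i q i) => z; rewrite lcomb_mulmx scaler_sumr.
by apply: eq_bigr => i _; rewrite escale_act qE rowK.
Qed.

End LatticeBasis.
End Coordinates.

Section Pairing.
Variables (A1 A2 : comAlgType E) (V1 : lmodType A1) (V2 : lmodType A2).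
Variables (pr : V1 -> V2 -> E) (M1 : V1 -> Prop) (M2 : V2 -> Prop).
Hypothesis pr_bil : ebilinear pr.
Hypothesis pr_perfect : perfect_pairing O pr M1 M2.

Lemma prDl v v' w : pr (v + v') w = pr v w + pr v' w.
Proof. by have := pr_bil.1 1 v v' w; rewrite escale1 mul1r. Qed.
Lemma prDr v w w' : pr v (w + w') = pr v w + pr v w'.
Proof. by have := pr_bil.2 1 v w w'; rewrite escale1 mul1r. Qed.
Lemma pr0l w : pr 0 w = 0.
Proof. by apply: (addIr (pr 0 w)); rewrite -prDl !add0r. Qed.
Lemma pr0r v : pr v 0 = 0.
Proof. by apply: (addIr (pr v 0)); rewrite -prDr !add0r. Qed.
Lemma prZl c v w : pr (escale c v) w = c * pr v w.
Proof. by have := pr_bil.1 c v 0 w; rewrite addr0 pr0l addr0. Qed.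
Lemma prZr c v w : pr v (escale c w) = c * pr v w.
Proof. by have := pr_bil.2 c v w 0; rewrite addr0 pr0r addr0. Qed.

Lemma prBr v w w' : pr v (w - w') = pr v w - pr v w'.
Proof. by rewrite -escaleN1 prDr prZr mulN1r. Qed.

Lemma pr_idem_adjoint (e1 : A1) (e2 : A2) :
  (forall m1 m2, M1 m1 -> M2 m2 -> pr (e1 *: m1) ((1 - e2) *: m2) = 0) ->
  (forall m1 m2, M1 m1 -> M2 m2 -> pr ((1 - e1) *: m1) (e2 *: m2) = 0) ->
  forall m1 m2, M1 m1 -> M2 m2 -> pr (e1 *: m1) m2 = pr m1 (e2 *: m2).
Proof.
move=> orth1 orth2 m1 m2 M1m1 M2m2.
have m1E : m1 = (1 - e1) *: m1 + e1 *: m1 by rewrite scalerBl scale1r subrK.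
have m2E : m2 = e2 *: m2 + (1 - e2) *: m2 by rewrite scalerBl scale1r addrC subrK.
by rewrite {1}m2E prDr orth1 // addr0 {2}m1E prDl orth2 // add0r.
Qed.

Lemma pr_lcombl n (b : 'I_n -> V1) x w : pr (lcomb b x) w = \sum_i x 0 i * pr (b i) w.
Proof.
rewrite /lcomb (big_morph _ (fun v v' => prDl v v' w) (pr0l w)).
by apply: eq_bigr => i _; rewrite prZl.
Qed.
Lemma pr_lcombr n (b : 'I_n -> V2) v y : pr v (lcomb b y) = \sum_i y 0 i * pr v (b i).
Proof.
by rewrite /lcomb (big_morph _ (prDr v) (pr0r v)); apply: eq_bigr => i _; rewrite prZr.
Qed.

Lemma pr_lcomb_dual n (b1 : 'I_n -> V1) (b2 : 'I_n -> V2) :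
  (forall i j, pr (b1 i) (b2 j) = (i == j)%:R) ->
  forall x y, pr (lcomb b1 x) (lcomb b2 y) = dotmx x y.
Proof.
move=> b12 x y; rewrite pr_lcombl; apply: eq_bigr => i _; rewrite pr_lcombr.
rewrite (bigD1 i) //= big1 ?addr0 => [|j /negbTE ji]; rewrite b12 ?eqxx ?mulr1 //.
by rewrite eq_sym ji mulr0.
Qed.

Section DualBasis.
Variables (n : nat) (b1 : 'I_n -> V1).
Hypothesis M1b1 : lattice_basis M1 b1.

Lemma dual_family_exists : exists b2 : 'I_n -> V2,
  (forall i, M2 (b2 i)) /\ forall x y, pr (lcomb b1 x) (lcomb b2 y) = dotmx x y.
Proof.
case: (M1b1) => b1_inj b1_surj M1E; case: pr_perfect => _ _ _ onto2 _.
have b1_surj' v : exists z, v == lcomb b1 z by have [z ->] := b1_surj v; exists z.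
pose coord v := xchoose (b1_surj' v).
have coordE v : v = lcomb b1 (coord v) := eqP (xchooseP (b1_surj' v)).
have coordK z : coord (lcomb b1 z) = z := b1_inj _ _ (esym (coordE _)).
have [b2 b2E] : exists b2 : 'I_n -> V2, forall i,
    M2 (b2 i) /\ forall x, M1 x -> coord x 0 i = pr x (b2 i).
  apply: (@fin_all_exists _ (fun=> V2)
    (fun i y => M2 y /\ forall x, M1 x -> coord x 0 i = pr x y)) => i.
  apply: (onto2 (fun v => coord v 0 i)) => [a x x' _ _ _ | x].
    by rewrite (coordE x) (coordE x') -lcombZ -lcombD !coordK !mxE.
  by case/(lattice_basis_coord M1b1) => z Oz ->; rewrite coordK.
exists b2; split=> [i | ]; first by case: (b2E i).
apply: pr_lcomb_dual => i j.
rewrite -(proj2 (b2E j) _ (lattice_basis_mem M1b1 i)) -(lcomb_delta b1 i) coordK.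
by rewrite mxE eqxx eq_sym.
Qed.

Lemma dual_family_basis (b2 : 'I_n -> V2) : is_lattice O (@escale _ _ V2) M2 ->
  (forall i, M2 (b2 i)) -> (forall x y, pr (lcomb b1 x) (lcomb b2 y) = dotmx x y) ->
  lattice_basis M2 b2.
Proof.
move=> latM2 M2b2 prE; have [n2 [c M2c]] := lattice_basis_exists latM2.
case: pr_perfect => pr_int _ _ _ nondeg2.
have pr_b1 j y : pr (b1 j) (lcomb b2 y) = y 0 j.
  by rewrite -(lcomb_delta b1 j) prE dotmxC dotmx_delta.
have M20 : M2 0 by case: M2c => _ _ /(_ 0); rewrite lcomb0 => ->; exact: Omx0.
have M2_lcomb z : Omx z -> M2 (lcomb b2 z).
  move=> Oz; apply: big_ind => // [x y Mx My | i _].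
    by have := lattice_basis_comb M2c Opred1 Mx My; rewrite escale1.
  by have := lattice_basis_comb M2c (Oz 0 i) (M2b2 i) M20; rewrite addr0.
have M2E v : M2 v -> v = lcomb b2 (\row_j pr (b1 j) v).
  move=> M2v; apply/eqP; rewrite -subr_eq0; apply/eqP; apply: nondeg2.
    have Oz : Omx (\row_j pr (b1 j) v).
      by move=> i j; rewrite mxE; apply: pr_int (lattice_basis_mem M1b1 j) M2v.
    have := lattice_basis_comb M2c (OpredN Opred1) (M2_lcomb _ Oz) M2v.
    by rewrite escaleN1 addrC.
  move=> x /(lattice_basis_coord M1b1) [t _ ->].
  rewrite prBr prE pr_lcombl; apply/eqP; rewrite subr_eq0; apply/eqP.
  by apply: eq_bigr => i _; rewrite mxE.
split.
- by move=> y y' yy'; apply/rowP => j; rewrite -!pr_b1 yy'.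
- move=> v; case: (M2c) => _ /(_ v) [w ->] _.
  exists (\sum_j w 0 j *: \row_i pr (b1 i) (c j)); rewrite lcomb_sum.
  by apply: eq_bigr => j _; rewrite -M2E //; exact: lattice_basis_mem M2c j.
- move=> z; split=> [M2z i j | /M2_lcomb //].
  by rewrite (ord1 i) -pr_b1; apply: pr_int (lattice_basis_mem M1b1 j) M2z.
Qed.
End DualBasis.
End Pairing.

Lemma Mker_fixed (A : comAlgType E) (T : A -> Prop) (lam : {rmorphism A -> E}) (e : A)
    (V : lmodType A) (M : V -> Prop) :
  red_fflat_local_order O T -> alg_char O T lam -> lambda_idem lam e ->
  forall v, Mker T lam M v <-> M v /\ e *: v = v.
Proof.
move=> [[k [t [t_span _ T_coord]]] _ _ _ _] [lamZ _] [_ lam_e e_lam] v.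
split=> [[Mv v_ker] | [Mv ev]]; last first.
  by split=> // t' _ lam_t'; rewrite -ev scalerA e_lam lam_t' !scale0r.
(* A nonzero multiple of 1 - e lies in T ∩ ker lam, so it kills v. *)
split=> //; have [c ceE] := t_span (1 - e).
have [d d_neq0 Odc] := exists_common_denominator c.
have Tdc : T (d *: (1 - e)).
  by rewrite ceE scaler_sumr; under eq_bigr do rewrite scalerA; apply/T_coord.
have lam_dc : lam (d *: (1 - e)) = 0 by rewrite lamZ rmorphB rmorph1 lam_e subrr mulr0.
have := v_ker _ Tdc lam_dc; rewrite -mulr_algl -scalerA -/(escale d _) => dv0.
have : (1 - e) *: v = 0 by rewrite -(escaleK ((1 - e) *: v) d_neq0) dv0 escale0r.
by rewrite scalerBl scale1r => /eqP; rewrite subr_eq0 => /eqP <-.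
Qed.

Section LatticeAction.
Variables (A : comAlgType E) (V : lmodType A) (M : V -> Prop).
Variables (n : nat) (b : 'I_n -> V) (e : A) (Q : 'M[E]_n).
Hypothesis Mb : lattice_basis M b.
Hypothesis eQ : forall z, e *: lcomb b z = lcomb b (z *m Q).

Lemma eM_lcomb z : eM e M (lcomb b z) <-> rowO Q z.
Proof.
case: (Mb) => b_inj _ ME.
split=> [[_ [/(lattice_basis_coord Mb) [y Oy ->]]] | [y Oy ->]].
  by rewrite eQ => /b_inj ->; exists y.
by exists (lcomb b y); rewrite ME eQ.
Qed.

Lemma eta_lambda_fittingmx x : eta_lambda O e M x <-> fittingmx Q x.
Proof.
case: (Mb) => b_inj b_surj ME; symmetry.
apply: (@fitting0_iso _ _ _ _ (lcomb b)) => //.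
- exact: lcombD.
- exact: lcombZ.
- by move=> z; rewrite eM_lcomb.
- by move=> z; rewrite eM_lcomb ME.
Qed.

Lemma idempotent_action_mx : e * e = e -> Q *m Q = Q.
Proof.
case: (Mb) => b_inj _ _ ee; apply/row_matrixP => i; rewrite !rowE mulmxA.
by apply: b_inj; rewrite -!eQ scalerA ee.
Qed.

Lemma fixed_basis_of_free_rank1 (T : A -> Prop) (lam : {rmorphism A -> E}) d :
  red_fflat_local_order O T -> alg_char O T lam -> lambda_idem lam e ->
  free_rank1 O (@escale _ _ V) (Mker T lam M) d ->
  exists2 z, d = lcomb b z & fixed_basis Q z.
Proof.
move=> T_ord lamT lam_e [d_ker d_tf d_gen]; have MkerE := Mker_fixed M T_ord lamT lam_e.
case: (Mb) => b_inj _ ME.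
have MkerP z : Mker T lam M (lcomb b z) <-> Omx z /\ z *m Q = z.
  by rewrite MkerE ME eQ; split=> -[Oz zQ]; split=> //; [apply: b_inj | rewrite zQ].
have [/(lattice_basis_coord Mb) [z _ dE] _] := proj1 (MkerE d) d_ker.
exists z => //; have [Oz zQ] : Omx z /\ z *m Q = z by apply/MkerP; rewrite -dE.
split=> //.
  apply: contraTneq isT => z0; have := d_tf 1 Opred1; rewrite dE z0 lcomb0 escale0r.
  by move/(_ erefl)/eqP; rewrite oner_eq0.
move=> m Om mQ; have [a [Oa mE]] := d_gen _ (proj2 (MkerP m) (conj Om mQ)).
by exists a => //; apply: b_inj; rewrite mE dE lcombZ.
Qed.

End LatticeAction.

Section InducedPairing.
Variables (A1 A2 : comAlgType E) (V1 : lmodType A1) (V2 : lmodType A2).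
Variables (pr : V1 -> V2 -> E) (M1 : V1 -> Prop) (M2 : V2 -> Prop).
Variables (n : nat) (b1 : 'I_n -> V1) (b2 : 'I_n -> V2) (e1 : A1) (e2 : A2) (Q : 'M[E]_n).
Hypotheses (M1b1 : lattice_basis M1 b1) (M2b2 : lattice_basis M2 b2).
Hypothesis prE : forall x y, pr (lcomb b1 x) (lcomb b2 y) = dotmx x y.
Hypothesis e1Q : forall z, e1 *: lcomb b1 z = lcomb b1 (z *m Q).
Hypothesis e2Q : forall z, e2 *: lcomb b2 z = lcomb b2 (z *m Q^T).
Hypothesis QQ : Q *m Q = Q.

Lemma induced_pairing_half :
  [/\ forall x y, eM e1 M1 x -> M1 x -> eM e2 M2 y -> O (pr x y),
      forall x, eM e1 M1 x -> (forall y, eM e2 M2 y -> O (pr x y)) -> M1 x &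
      forall f : V2 -> E,
        (forall a y y', O a -> eM e2 M2 y -> eM e2 M2 y' ->
           O (f (escale a y + y') - (a * f y + f y'))) ->
        (forall y, eM e2 M2 y -> M2 y -> O (f y)) ->
        exists x, eM e1 M1 x /\ forall y, eM e2 M2 y -> O (f y - pr x y)].
Proof.
case: (M1b1) (M2b2) => _ b1_surj M1E [_ b2_surj M2E].
have eM1E := eM_lcomb M1b1 e1Q; have eM2E := eM_lcomb M2b2 e2Q.
split.
- move=> x y; have [[u ->] [v ->]] := (b1_surj x, b2_surj y).
  by rewrite eM1E M1E eM2E prE; exact: Opred_dotmx_rowO.
- move=> x; have [u ->] := b1_surj x; rewrite eM1E M1E => u_row u_dual.
  apply: rowO_dual_Omx QQ u_row _ => v /eM2E; rewrite -prE; exact: u_dual.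
move=> f f_lin f_int.
have [u u_row u_dual] : exists2 u, rowO Q u &
    forall y, rowO Q^T y -> O (f (lcomb b2 y) - dotmx u y).
  apply: modO_linear_dotmx QQ _ _ => [a y y' Oa /eM2E ? /eM2E ? | y /eM2E ? /M2E ?].
    by rewrite lcombD lcombZ; apply: f_lin.
  exact: f_int.
exists (lcomb b1 u); split; first exact/eM1E.
by move=> y; have [v ->] := b2_surj y; rewrite eM2E prE => /u_dual.
Qed.

End InducedPairing.

Section DualBases.
Variables (A1 A2 : comAlgType E) (V1 : lmodType A1) (V2 : lmodType A2).
Variables (pr : V1 -> V2 -> E) (M1 : V1 -> Prop) (M2 : V2 -> Prop).
Variables (n : nat) (b1 : 'I_n -> V1) (b2 : 'I_n -> V2) (e1 : A1) (e2 : A2) (Q : 'M[E]_n).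
Hypotheses (M1b1 : lattice_basis M1 b1) (M2b2 : lattice_basis M2 b2).
Hypothesis prE : forall x y, pr (lcomb b1 x) (lcomb b2 y) = dotmx x y.
Hypothesis e1Q : forall z, e1 *: lcomb b1 z = lcomb b1 (z *m Q).
Hypothesis e2Q : forall z, e2 *: lcomb b2 z = lcomb b2 (z *m Q^T).
Hypothesis QQ : Q *m Q = Q.

Lemma induced_perfect_dual_bases : induced_perfect_EmodO O pr (eM e1 M1) M1 (eM e2 M2) M2.
Proof.
have [wd1 inj1 onto1] := induced_pairing_half M1b1 M2b2 prE e1Q e2Q QQ.
have prE' y x : pr (lcomb b1 x) (lcomb b2 y) = dotmx y x by rewrite prE dotmxC.
have e1Q' z : e1 *: lcomb b1 z = lcomb b1 (z *m Q^T^T) by rewrite trmxK.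
have QQ' : Q^T *m Q^T = Q^T by rewrite -trmx_mul QQ.
(* The other half is the first one for the transposed pairing, with Q^T in place of Q. *)
have [wd2 inj2 onto2] := @induced_pairing_half _ _ _ _ (fun y x => pr x y) M2 M1 n b2 b1
  e2 e1 Q^T M2b2 M1b1 prE' e2Q e1Q' QQ'.
by split=> // x y *; apply: wd2.
Qed.

Lemma eta_lambda_dual_bases x : eta_lambda O e1 M1 x <-> eta_lambda O e2 M2 x.
Proof.
by rewrite (eta_lambda_fittingmx M1b1 e1Q) (eta_lambda_fittingmx M2b2 e2Q) fittingmx_tr.
Qed.

Lemma eta_lambda_rank1 (T1 : A1 -> Prop) (T2 : A2 -> Prop)
    (lam1 : {rmorphism A1 -> E}) (lam2 : {rmorphism A2 -> E}) d1 d2 :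
  red_fflat_local_order O T1 -> red_fflat_local_order O T2 ->
  alg_char O T1 lam1 -> alg_char O T2 lam2 -> lambda_idem lam1 e1 -> lambda_idem lam2 e2 ->
  free_rank1 O (@escale _ _ V1) (Mker T1 lam1 M1) d1 ->
  free_rank1 O (@escale _ _ V2) (Mker T2 lam2 M2) d2 ->
  forall x, eta_lambda O e1 M1 x <-> exists a, O a /\ x = a * pr d1 d2.
Proof.
move=> T1_ord T2_ord lamT1 lamT2 lam_e1 lam_e2 d1_free d2_free x.
have [z1 -> z1B] := fixed_basis_of_free_rank1 M1b1 e1Q T1_ord lamT1 lam_e1 d1_free.
have [z2 -> z2B] := fixed_basis_of_free_rank1 M2b2 e2Q T2_ord lamT2 lam_e2 d2_free.
by rewrite (eta_lambda_fittingmx M1b1 e1Q) prE; exact: fittingmx_rank1.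
Qed.

End DualBases.
End ValuationRing.

Theorem mainTheorem10
  (E : fieldType) (O : E -> Prop) (w : E)
  (A1 A2 : comAlgType E) (T1 : A1 -> Prop) (T2 : A2 -> Prop)
  (lam1 : {rmorphism A1 -> E}) (lam2 : {rmorphism A2 -> E})
  (e1 : A1) (e2 : A2)
  (V1 : lmodType A1) (V2 : lmodType A2) (M1 : V1 -> Prop) (M2 : V2 -> Prop)
  (pr : V1 -> V2 -> E) :
  complete_dvr O w ->
  red_fflat_local_order O T1 -> red_fflat_local_order O T2 ->
  alg_char O T1 lam1 -> alg_char O T2 lam2 ->
  lambda_idem lam1 e1 -> lambda_idem lam2 e2 ->
  Tlattice O T1 M1 -> Tlattice O T2 M2 ->
  ebilinear pr -> perfect_pairing O pr M1 M2 ->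
  (forall m1 m2, M1 m1 -> M2 m2 -> pr (e1 *: m1) ((1 - e2) *: m2) = 0) ->
  (forall m1 m2, M1 m1 -> M2 m2 -> pr ((1 - e1) *: m1) (e2 *: m2) = 0) ->
  (* (a) *)
  (induced_perfect_EmodO O pr (eM e1 M1) M1 (eM e2 M2) M2 /\
   (forall x, eta_lambda O e1 M1 x <-> eta_lambda O e2 M2 x)) /\
  (* (b) *)
  (forall d1 d2,
     free_rank1 O (@escale _ _ V1) (Mker T1 lam1 M1) d1 ->
     free_rank1 O (@escale _ _ V2) (Mker T2 lam2 M2) d2 ->
     (forall x, eta_lambda O e1 M1 x <-> eta_lambda O e2 M2 x) /\
     (forall x, eta_lambda O e1 M1 x <-> exists a, O a /\ x = a * pr d1 d2)).
Proof.
move=> [dvr _] T1_ord T2_ord lamT1 lamT2 lam_e1 lam_e2 [latM1 _] [latM2 _] pr_bil pr_perf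
  orth1 orth2.
have Osub : subring_of O by case: dvr.
have Oval := dvr_valuation Osub dvr.
have [n [b1 M1b1]] := lattice_basis_exists latM1.
have [b2 [M2b2' prE]] := dual_family_exists Osub pr_bil pr_perf M1b1.
have M2b2 := dual_family_basis Osub pr_bil pr_perf M1b1 latM2 M2b2' prE.
have [Q e1Q] := lattice_basis_action M1b1 e1.
have [Q' e2Q'] := lattice_basis_action M2b2 e2.
have QQ : Q *m Q = Q by case: lam_e1 => ee _ _; exact: idempotent_action_mx M1b1 e1Q ee.
have Q'E : Q' = Q^T.
  apply: (adjoint_mx Osub) => x y Ox Oy; rewrite -!prE -e1Q -e2Q'.
  by apply: (pr_idem_adjoint pr_bil orth1 orth2); [case: M1b1 | case: M2b2] => _ _ ->.
subst Q'; split; first split.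
- exact (induced_perfect_dual_bases Osub Oval M1b1 M2b2 prE e1Q e2Q' QQ).
- exact (eta_lambda_dual_bases Osub Oval M1b1 M2b2 e1Q e2Q').
move=> d1 d2 d1_free d2_free; split.
  exact (eta_lambda_dual_bases Osub Oval M1b1 M2b2 e1Q e2Q').
exact (eta_lambda_rank1 Osub Oval M1b1 M2b2 prE e1Q e2Q' QQ
  T1_ord T2_ord lamT1 lamT2 lam_e1 lam_e2 d1_free d2_free).
Qed.
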